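(* Let $C\subseteq\omega$ be noncomputable and let $A\subseteq\omega$ be an infinite set whose complement $\omega\setminus A$ is hyperimmune. Then there is an infinite subset $G\subseteq A$ which does not compute $C$. *)

(* Oracle computability via Kleene's mu-recursive functions
   relative to an oracle X : nat -> bool (characteristic function of a set). *)
From Stdlib Require Import Arith List.
Import ListNotations.

Inductive prog : Type :=
| PZero : prog
| PSucc : prog
| PProj : nat -> prog
| POrc  : prog
| PComp : prog -> list prog -> prog
| PRec  : prog -> prog -> prog
| PMu   : prog -> prog.

Inductive eval (X : nat -> bool) : prog -> list nat -> nat -> Prop :=
| ev_zero : forall xs, eval X PZero xs 0
| ev_succ : forall x xs, eval X PSucc (x :: xs) (S x)
| ev_proj : forall i xs v, nth_error xs i = Some v -> eval X (PProj i) xs v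
| ev_orc  : forall x xs, eval X POrc (x :: xs) (if X x then 1 else 0)
| ev_comp : forall f gs xs ys v,
    evals X gs xs ys -> eval X f ys v -> eval X (PComp f gs) xs v
| ev_rec0 : forall f g xs v, eval X f xs v -> eval X (PRec f g) (0 :: xs) v
| ev_recS : forall f g n xs w v,
    eval X (PRec f g) (n :: xs) w -> eval X g (n :: w :: xs) v ->
    eval X (PRec f g) (S n :: xs) v
| ev_mu : forall f xs y,
    eval X f (y :: xs) 0 ->
    (forall z, z < y -> exists k, eval X f (z :: xs) (S k)) ->
    eval X (PMu f) xs y
with evals (X : nat -> bool) : list prog -> list nat -> list nat -> Prop :=
| evs_nil : forall xs, evals X nil xs nil
| evs_cons : forall g gs xs y ys,
    eval X g xs y -> evals X gs xs ys -> evals X (g :: gs) xs (y :: ys).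

Definition empty_oracle : nat -> bool := fun _ => false.

Definition turing_computes (X C : nat -> bool) : Prop :=
  exists p : prog, forall n, eval X p [n] (if C n then 1 else 0).

Definition computable_set (C : nat -> bool) : Prop :=
  turing_computes empty_oracle C.

Definition computable_fun (f : nat -> nat) : Prop :=
  exists p : prog, forall n, eval empty_oracle p [n] (f n).

Definition infinite_set (A : nat -> bool) : Prop :=
  forall m, exists n, m <= n /\ A n = true.

Definition principal_function (B : nat -> bool) (p : nat -> nat) : Prop :=
  (forall n, p n < p (S n)) /\ (forall x, B x = true <-> exists n, p n = x).

Definition hyperimmune (B : nat -> bool) : Prop :=
  infinite_set B /\
  forall p, principal_function B p ->
  forall f, computable_fun f -> exists n, f n < p n.

Definition subset (G A : nat -> bool) : Prop := forall n, G n = true -> A n = true.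

From Stdlib Require Import Arith List Lia Bool Classical ClassicalEpsilon Cantor.
Import ListNotations.

(* Build G by forcing with finite stems inside A.  Given a program p, either
   some finite extension of the stem inside A makes p^G wrong or undefined at
   some input, and this is then forced, or every such extension computes C
   correctly where it converges and convergence is always possible.  In the
   latter case look above n for splittings: two finite extensions giving
   different values.  If at some n there are none, the first convergent
   computation found is correct, so C is computable.  Otherwise a splitting
   above n exhibits an element outside A above n, since its two extensions
   cannot both lie in A; searching for splittings one after the other yields a
   computable function dominating the principal function of the complement of
   A, contradicting hyperimmunity.  For these two computations the
   step-counting evaluator is itself compiled into a program, with finite sets
   coded in binary. *)

Definition prog_nested_ind (P : prog -> Prop)
  (H0 : P PZero) (H1 : P PSucc) (H2 : forall i, P (PProj i)) (H3 : P POrc)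
  (H4 : forall f gs, P f -> Forall P gs -> P (PComp f gs))
  (H5 : forall f g, P f -> P g -> P (PRec f g))
  (H6 : forall f, P f -> P (PMu f)) : forall p, P p :=
  fix F p := match p with
  | PZero => H0 | PSucc => H1 | PProj i => H2 i | POrc => H3
  | PComp f gs => H4 f gs (F f)
      ((fix L gs := match gs return Forall P gs with
         | [] => Forall_nil _ | g :: gs => Forall_cons _ (F g) (L gs) end) gs)
  | PRec f g => H5 f g (F f) (F g)
  | PMu f => H6 f (F f)
  end.

(** * Clocked evaluation *)

(* The clocked evaluator returns [S v] for the value [v] and [0] for "no value
   within the clock".  It only uses arithmetic on [nat] so that it can itself
   be compiled into a program below. *)

Fixpoint rec_run (F : nat) (Gf : nat -> nat -> nat) (n : nat) : nat :=
  match n with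
  | 0 => F
  | S n => match rec_run F Gf n with 0 => 0 | S w => Gf n w end
  end.

(* One step of the search for the least [y] with value [0]: the state is [0]
   while searching, [1] once stuck on an undefined value, [S (S y)] once
   [y] is found. *)
Definition mu_step (st t v : nat) : nat :=
  match st with
  | 0 => match v with 0 => 1 | 1 => t + 2 | _ => 0 end
  | _ => st
  end.

Fixpoint mu_run (val : nat -> nat) (t : nat) : nat :=
  match t with 0 => 0 | S t => mu_step (mu_run val t) t (val t) end.

Definition all_defined (ys : list nat) : bool := forallb (fun y => negb (y =? 0)) ys.

Fixpoint run (O : nat -> bool) (s : nat) (p : prog) (xs : list nat) {struct p} : nat :=
  match p with
  | PZero => 1
  | PSucc => match xs with x :: _ => S (S x) | [] => 0 end
  | PProj i => match nth_error xs i with Some v => S v | None => 0 end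
  | POrc => match xs with x :: _ => S (Nat.b2n (O x)) | [] => 0 end
  | PComp f gs =>
      let ys := map (fun g => run O s g xs) gs in
      if all_defined ys then run O s f (map pred ys) else 0
  | PRec f g =>
      match xs with
      | [] => 0
      | n :: xs' => rec_run (run O s f xs') (fun n w => run O s g (n :: w :: xs')) n
      end
  | PMu f =>
      match mu_run (fun t => run O s f (t :: xs)) s with S (S y) => S y | _ => 0 end
  end.

Lemma mu_run_searching val t :
  mu_run val t = 0 <-> forall w, w < t -> exists k, val w = S (S k).
Proof.
  induction t as [|t IH]; simpl.
  - split; [intros; lia | reflexivity].
  - destruct (mu_run val t) as [|st] eqn:E.
    + split.
      * intros H w Hw. destruct (val t) as [|[|k]] eqn:V; cbn in H; try lia.
        destruct (Nat.eq_dec w t) as [->|]; [eauto|]. apply (proj1 IH eq_refl); lia.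
      * intros H. destruct (H t ltac:(lia)) as [k ->]. reflexivity.
    + split; [discriminate|]. intros H.
      assert (S st = 0) by (apply IH; intros; apply H; lia). discriminate.
Qed.

Lemma mu_run_found val t y :
  mu_run val t = S (S y) <->
  y < t /\ val y = 1 /\ forall w, w < y -> exists k, val w = S (S k).
Proof.
  induction t as [|t IH]; cbn [mu_run]; [split; [discriminate | lia]|].
  destruct (mu_run val t) as [|st] eqn:E.
  - pose proof (proj1 (mu_run_searching val t) E) as Hall.
    assert (Hne : forall z, z < t -> val z <> 1).
    { intros z Hz. destruct (Hall z Hz) as [k ->]. discriminate. }
    split.
    + intros H. cbn [mu_step] in H.
      destruct (val t) as [|[|k]] eqn:V; try discriminate H.
      replace y with t by lia. auto.
    + intros (Hy & Hv & Hw).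
      assert (y = t) as ->.
      { destruct (Nat.eq_dec y t); [auto | exfalso; apply (Hne y); auto; lia]. }
      cbn [mu_step]. rewrite Hv. f_equal; lia.
  - cbn [mu_step]. rewrite IH. split.
    + intros (? & ? & ?). repeat split; auto.
    + intros (Hy & Hv & Hw). destruct (Nat.eq_dec y t) as [->|].
      * assert (S st = 0) by (rewrite <- E; apply mu_run_searching; auto). discriminate.
      * repeat split; auto; lia.
Qed.

Lemma mu_run_ext val val' t :
  (forall u, u < t -> val u = val' u) -> mu_run val t = mu_run val' t.
Proof.
  induction t; simpl; intros H; auto.
  rewrite IHt by (intros; apply H; lia). rewrite H by lia. reflexivity.
Qed.

Lemma rec_run_ext F Gf Gf' n :
  (forall m w, m < n -> rec_run F Gf m = S w -> Gf m w = Gf' m w) ->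
  rec_run F Gf n = rec_run F Gf' n.
Proof.
  induction n; simpl; intros H; auto.
  rewrite <- IHn by (intros; apply H; auto; lia).
  destruct (rec_run F Gf n) eqn:E; auto.
Qed.

Definition agree_upto (O O' : nat -> bool) (U : nat) : Prop :=
  forall z, z < U -> O z = O' z.

Lemma common_bound (Q : nat -> nat -> Prop) N :
  (forall t U U', U <= U' -> Q t U -> Q t U') ->
  (forall t, t < N -> exists U, Q t U) -> exists U, forall t, t < N -> Q t U.
Proof.
  intros Hmono. induction N as [|N IH]; intros H.
  - exists 0; intros; lia.
  - destruct IH as [U HU]; [intros; apply H; lia|].
    destruct (H N ltac:(lia)) as [U' HU'].
    exists (U + U'). intros t Ht. destruct (Nat.eq_dec t N) as [->|].
    + eapply Hmono; [|eauto]; lia.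
    + eapply Hmono; [|apply HU; lia]; lia.
Qed.

Lemma common_use (P : nat -> (nat -> bool) -> Prop) O N :
  (forall t, t < N -> exists U, forall O', agree_upto O O' U -> P t O') ->
  exists U, forall O', agree_upto O O' U -> forall t, t < N -> P t O'.
Proof.
  intros H.
  destruct (common_bound (fun t U => forall O', agree_upto O O' U -> P t O') N) as [U HU];
    auto.
  - intros t U U' HUU HQ O' HO. apply HQ. intros z Hz. apply HO. lia.
  - exists U. auto.
Qed.

Lemma run_use O s p : forall xs, exists U,
  forall O', agree_upto O O' U -> run O' s p xs = run O s p xs.
Proof.
  induction p using prog_nested_ind; intros xs; simpl.
  1-3: exists 0; auto.
  - destruct xs as [|x xs]; [exists 0; auto|].
    exists (S x). intros O' H. rewrite (H x); auto.
  - assert (Hgs : exists U, forall O', agree_upto O O' U ->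
        map (fun g => run O' s g xs) gs = map (fun g => run O s g xs) gs).
    { induction H as [|g gs Hg _ IH]; [exists 0; auto|].
      destruct IH as [U1 HU1], (Hg xs) as [U2 HU2]. exists (U1 + U2).
      intros O' HO. simpl. rewrite HU1, HU2; auto; intros z Hz; apply HO; lia. }
    destruct Hgs as [U1 HU1].
    destruct (IHp (map pred (map (fun g => run O s g xs) gs))) as [U2 HU2].
    exists (U1 + U2). intros O' HO. rewrite HU1 by (intros z Hz; apply HO; lia).
    destruct all_defined; auto. apply HU2. intros z Hz; apply HO; lia.
  - destruct xs as [|n xs']; [exists 0; auto|].
    destruct (IHp1 xs') as [U1 HU1].
    set (F := run O s p1 xs'). set (Gf := fun n w => run O s p2 (n :: w :: xs')).
    destruct (common_use (fun m O' =>
        run O' s p2 (m :: pred (rec_run F Gf m) :: xs') = Gf m (pred (rec_run F Gf m))) O n)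
      as [U2 HU2].
    { intros t _. apply IHp2. }
    exists (U1 + U2). intros O' HO.
    rewrite HU1 by (intros z Hz; apply HO; lia). fold F.
    symmetry. apply rec_run_ext. intros m w Hm Hw.
    replace w with (pred (rec_run F Gf m)) by (rewrite Hw; reflexivity).
    symmetry. apply HU2; auto. intros z Hz; apply HO; lia.
  - destruct (common_use (fun t O' => run O' s p (t :: xs) = run O s p (t :: xs)) O s)
      as [U HU].
    { intros t _. apply IHp. }
    exists U. intros O' HO. rewrite (mu_run_ext _ (fun t => run O s p (t :: xs))); auto.
Qed.

Lemma run_mono O p : forall s s' xs v, s <= s' -> run O s p xs = S v -> run O s' p xs = S v.
Proof.
  induction p using prog_nested_ind; intros s s' xs v Hs Hv; simpl in *; auto.
  - destruct (all_defined (map (fun g => run O s g xs) gs)) eqn:E; [|discriminate].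
    assert (Hm : map (fun g => run O s' g xs) gs = map (fun g => run O s g xs) gs).
    { clear IHp Hv. induction H as [|g gs Hg _ IH]; simpl in *; auto.
      apply andb_true_iff in E. destruct E as [E1 E2].
      destruct (run O s g xs) as [|w] eqn:Eg; [discriminate|].
      rewrite IH, (Hg s s' xs w); auto. }
    rewrite Hm, E. eauto.
  - destruct xs as [|n xs']; auto.
    revert v Hv. induction n as [|n IHn]; simpl; intros v Hv; eauto.
    destruct (rec_run (run O s p1 xs') _ n) as [|w] eqn:E; [discriminate|].
    rewrite (IHn w eq_refl). eauto.
  - destruct (mu_run (fun t => run O s p (t :: xs)) s) as [|[|y]] eqn:E; try discriminate.
    apply mu_run_found in E. destruct E as (Hy & Hval & Hbelow).
    replace (mu_run (fun t => run O s' p (t :: xs)) s') with (S (S y)); auto.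
    symmetry. apply mu_run_found. repeat split; [lia | eauto |].
    intros w Hw. destruct (Hbelow w Hw) as [k Hk]. eauto.
Qed.

Lemma run_sound O p : forall s xs v, run O s p xs = S v -> eval O p xs v.
Proof.
  induction p using prog_nested_ind; intros s xs v Hv; simpl in *.
  - injection Hv as <-. constructor.
  - destruct xs; [discriminate|]. injection Hv as <-. constructor.
  - destruct (nth_error xs i) eqn:E; [|discriminate]. injection Hv as <-. constructor; auto.
  - destruct xs; [discriminate|]. injection Hv as <-. constructor.
  - destruct (all_defined (map (fun g => run O s g xs) gs)) eqn:E; [|discriminate].
    econstructor; [|eapply IHp; eauto].
    clear IHp Hv. induction H as [|g gs Hg _ IH]; simpl in *; constructor.
    + apply andb_true_iff in E. destruct E as [E1 _].
      destruct (run O s g xs) eqn:Eg; [discriminate|]. eauto.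
    + apply IH. apply andb_true_iff in E. tauto.
  - destruct xs as [|n xs']; [discriminate|].
    revert v Hv. induction n as [|n IHn]; simpl; intros v Hv.
    + constructor. eauto.
    + destruct (rec_run (run O s p1 xs') _ n) eqn:E; [discriminate|].
      econstructor; [apply IHn; reflexivity | eauto].
  - destruct (mu_run (fun t => run O s p (t :: xs)) s) as [|[|y]] eqn:E; try discriminate.
    injection Hv as <-. apply mu_run_found in E. destruct E as (_ & Hval & Hbelow).
    constructor; [eauto|].
    intros z Hz. destruct (Hbelow z Hz) as [k Hk]. eauto.
Qed.

Fixpoint run_complete O p xs v (H : eval O p xs v) {struct H} :
  exists s, run O s p xs = S v
with runs_complete O gs xs ys (H : evals O gs xs ys) {struct H} :
  exists s, forall s', s <= s' -> map (fun g => run O s' g xs) gs = map S ys.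
Proof.
  - destruct H.
    1-4: exists 0; simpl; try rewrite H; reflexivity.
    + destruct (runs_complete _ _ _ _ H) as [s1 Hs1], (run_complete _ _ _ _ H0) as [s2 Hs2].
      exists (s1 + s2). simpl. rewrite (Hs1 (s1 + s2)) by lia.
      replace (all_defined (map S ys)) with true by (clear; induction ys; auto).
      rewrite map_map, map_id. eapply run_mono; [|eauto]; lia.
    + destruct (run_complete _ _ _ _ H) as [s Hs]. exists s. exact Hs.
    + destruct (run_complete _ _ _ _ H) as [s1 Hs1], (run_complete _ _ _ _ H0) as [s2 Hs2].
      exists (s1 + s2). simpl.
      pose proof (run_mono _ _ s1 (s1 + s2) _ _ ltac:(lia) Hs1) as Hs1'. simpl in Hs1'.
      rewrite Hs1'. eapply run_mono; [|eauto]; lia.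
    + destruct (run_complete _ _ _ _ H) as [s1 Hs1].
      destruct (common_bound (fun z s => exists k, run O s f (z :: xs) = S (S k)) y)
        as [s2 Hs2].
      { intros t U U' HU [k Hk]. exists k. eapply run_mono; eauto. }
      { intros z Hz. destruct (H0 z Hz) as [k Hk].
        destruct (run_complete _ _ _ _ Hk) as [s Hs]. eauto. }
      exists (S (y + s1 + s2)). cbn [run].
      replace (mu_run _ _) with (S (S y)); auto.
      symmetry. apply mu_run_found. repeat split; [lia | eapply run_mono; [|eauto]; lia |].
      intros w Hw. destruct (Hs2 w Hw) as [k Hk]. exists k. eapply run_mono; [|eauto]; lia.
  - destruct H.
    + exists 0. reflexivity.
    + destruct (run_complete _ _ _ _ H) as [s1 Hs1], (runs_complete _ _ _ _ H0) as [s2 Hs2].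
      exists (s1 + s2). intros s' Hs'. simpl. rewrite (Hs2 s') by lia.
      f_equal. eapply run_mono; [|eauto]; lia.
Qed.

Lemma eval_deterministic O p xs v v' : eval O p xs v -> eval O p xs v' -> v = v'.
Proof.
  intros H H'. destruct (run_complete _ _ _ _ H) as [s Hs], (run_complete _ _ _ _ H') as [s' Hs'].
  apply (run_mono O p s (s + s')) in Hs; [|lia].
  apply (run_mono O p s' (s + s')) in Hs'; [|lia]. congruence.
Qed.

Lemma eval_use O p xs v : eval O p xs v ->
  exists U, forall O', agree_upto O O' U -> eval O' p xs v.
Proof.
  intros H. destruct (run_complete _ _ _ _ H) as [s Hs], (run_use O s p xs) as [U HU].
  exists U. intros O' HO. eapply run_sound. rewrite HU; eauto.
Qed.

(** * Arithmetic programs *)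

Lemma eval_eq X p xs v v' : eval X p xs v -> v = v' -> eval X p xs v'.
Proof. intros H <-. exact H. Qed.

Fixpoint PProjs (k a : nat) : list prog :=
  match a with 0 => [] | S a => PProj k :: PProjs (S k) a end.

Lemma evals_PProjs_app X pre xs : evals X (PProjs (length pre) (length xs)) (pre ++ xs) xs.
Proof.
  revert pre. induction xs as [|x xs IH]; intros pre; simpl; constructor.
  - constructor. rewrite nth_error_app2, Nat.sub_diag by lia. reflexivity.
  - specialize (IH (pre ++ [x])). rewrite <- app_assoc, length_app, Nat.add_1_r in IH. exact IH.
Qed.

Lemma evals_PProjs X xs : evals X (PProjs 0 (length xs)) xs xs.
Proof. exact (evals_PProjs_app X [] xs). Qed.

Lemma evals_PProjs_cons X k a x xs ys :
  evals X (PProjs k a) xs ys -> evals X (PProjs (S k) a) (x :: xs) ys.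
Proof.
  revert k ys. induction a as [|a IH]; intros k ys H; inversion H as [|g gs xs' y ys' Hg Hgs];
    subst; constructor; auto.
  inversion Hg; subst. constructor. assumption.
Qed.

Create HintDb prog_eval.

(* Evaluates compositions of programs whose specifications are in [prog_eval];
   what remains are equalities between the specified and the expected value. *)
Ltac eval_leaf :=
  first [ apply ev_zero | apply ev_succ | apply ev_proj; reflexivity | eauto with prog_eval ].

Ltac eval_auto :=
  repeat match goal with
  | |- evals _ [] _ _ => apply evs_nil
  | |- evals _ (_ :: _) _ _ => eapply evs_cons
  | |- evals _ (PProjs 0 _) _ _ => apply evals_PProjs
  | |- evals _ (PProjs (S _) _) (_ :: _) _ => apply evals_PProjs_cons
  | |- eval _ (PComp _ _) _ _ => eapply ev_comp
  | |- eval _ _ _ _ => first [ solve [eval_leaf] | eapply eval_eq; [solve [eval_leaf] |] ]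
  end.

Fixpoint PConst (n : nat) : prog :=
  match n with 0 => PZero | S n => PComp PSucc [PConst n] end.

Lemma eval_PConst X n xs : eval X (PConst n) xs n.
Proof. induction n; simpl; eval_auto. Qed.
#[export] Hint Resolve eval_PConst : prog_eval.

Definition PPred : prog := PComp (PRec PZero (PProj 0)) [PProj 0].

Lemma eval_PPred X x xs : eval X PPred (x :: xs) (pred x).
Proof.
  unfold PPred. eval_auto.
  induction x; [repeat constructor | econstructor; [exact IHx | eval_auto]].
Qed.
#[export] Hint Resolve eval_PPred : prog_eval.

Definition PAdd : prog := PRec (PProj 0) (PComp PSucc [PProj 1]).

Lemma eval_PAdd X x y xs : eval X PAdd (x :: y :: xs) (x + y).
Proof.
  induction x; [repeat constructor | econstructor; [exact IHx | eval_auto]].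
Qed.
#[export] Hint Resolve eval_PAdd : prog_eval.

Definition PSub : prog := PComp (PRec (PProj 0) (PComp PPred [PProj 1])) [PProj 1; PProj 0].

Lemma eval_PSub X x y xs : eval X PSub (x :: y :: xs) (x - y).
Proof.
  unfold PSub. eval_auto.
  induction y; [constructor; eval_auto; lia | econstructor; [exact IHy | eval_auto; lia]].
Qed.
#[export] Hint Resolve eval_PSub : prog_eval.

Definition PMul : prog := PRec (PConst 0) (PComp PAdd [PProj 1; PProj 2]).

Lemma eval_PMul X x y xs : eval X PMul (x :: y :: xs) (x * y).
Proof.
  induction x; [constructor; eval_auto | econstructor; [exact IHx | eval_auto; lia]].
Qed.
#[export] Hint Resolve eval_PMul : prog_eval.

Definition PIsZero : prog := PComp PSub [PConst 1; PProj 0].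

Lemma eval_PIsZero X x xs : eval X PIsZero (x :: xs) (Nat.b2n (x =? 0)).
Proof. unfold PIsZero. eval_auto. destruct x; reflexivity. Qed.
#[export] Hint Resolve eval_PIsZero : prog_eval.

Definition PSgn : prog := PComp PIsZero [PIsZero].

Lemma eval_PSgn X x xs : eval X PSgn (x :: xs) (Nat.b2n (0 <? x)).
Proof. unfold PSgn. eval_auto. destruct x; reflexivity. Qed.
#[export] Hint Resolve eval_PSgn : prog_eval.

Definition PPow2 : prog := PComp (PRec (PConst 1) (PComp PAdd [PProj 1; PProj 1])) [PProj 0].

Lemma eval_PPow2 X x xs : eval X PPow2 (x :: xs) (2 ^ x).
Proof.
  unfold PPow2. eval_auto.
  induction x; [constructor; eval_auto | econstructor; [exact IHx | eval_auto; simpl; lia]].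
Qed.
#[export] Hint Resolve eval_PPow2 : prog_eval.

(* [c / d] is the least [q] with [c < (q + 1) * d]. *)
Definition PDiv : prog :=
  PMu (PComp PIsZero [PComp PSub [PComp PMul [PComp PSucc [PProj 0]; PProj 2]; PProj 1]]).

Lemma eval_PDiv X c d xs : 0 < d -> eval X PDiv (c :: d :: xs) (c / d).
Proof.
  intros Hd. pose proof (Nat.div_mod c d ltac:(lia)). pose proof (Nat.mod_upper_bound c d ltac:(lia)).
  constructor.
  - eval_auto. replace (S (c / d) * d - c) with (S (d - 1 - c mod d)) by lia. reflexivity.
  - intros z Hz. exists 0. eval_auto.
    assert (S z * d <= c / d * d) by (apply Nat.mul_le_mono_r; lia).
    replace (S z * d - c) with 0 by lia. reflexivity.
Qed.

Definition PMod2 : prog := PComp (PRec PZero (PComp PIsZero [PProj 1])) [PProj 0].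

Lemma eval_PMod2 X x xs : eval X PMod2 (x :: xs) (Nat.b2n (Nat.odd x)).
Proof.
  unfold PMod2. eval_auto.
  induction x; [repeat constructor | econstructor; [exact IHx | eval_auto]].
  rewrite Nat.odd_succ, <- Nat.negb_odd. destruct (Nat.odd x); reflexivity.
Qed.
#[export] Hint Resolve eval_PMod2 : prog_eval.

Definition PTestbit : prog := PComp PMod2 [PComp PDiv [PProj 0; PComp PPow2 [PProj 1]]].

Lemma eval_PTestbit X c x xs : eval X PTestbit (c :: x :: xs) (Nat.b2n (Nat.testbit c x)).
Proof.
  unfold PTestbit. eapply ev_comp.
  { eval_auto. apply eval_PDiv. apply Nat.neq_0_lt_0, Nat.pow_nonzero. lia. }
  eval_auto. rewrite <- Nat.shiftr_div_pow2, <- Nat.bit0_odd, Nat.shiftr_spec'. reflexivity.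
Qed.
#[export] Hint Resolve eval_PTestbit : prog_eval.

Definition PMuStep : prog :=
  PComp PAdd [PComp PMul [PComp PIsZero [PProj 0];
                          PComp PAdd [PComp PIsZero [PProj 2];
                                      PComp PMul [PComp PMul [PComp PSgn [PProj 2];
                                                              PComp PIsZero [PComp PPred [PProj 2]]];
                                                  PComp PSucc [PComp PSucc [PProj 1]]]]];
              PProj 0].

Lemma eval_PMuStep X st t v xs : eval X PMuStep (st :: t :: v :: xs) (mu_step st t v).
Proof. unfold PMuStep. eval_auto. destruct st, v as [|[|v]]; simpl; lia. Qed.
#[export] Hint Resolve eval_PMuStep : prog_eval.

Fixpoint PAllDefined (gs : list prog) : prog :=
  match gs with
  | [] => PConst 1
  | g :: gs => PComp PMul [PComp PSgn [g]; PAllDefined gs]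
  end.

Lemma eval_PAllDefined X gs xs ys :
  evals X gs xs ys -> eval X (PAllDefined gs) xs (Nat.b2n (all_defined ys)).
Proof. induction 1; simpl; eval_auto. destruct y; simpl; lia. Qed.

Definition distinct_defined (a b : nat) : bool :=
  match a, b with S v, S v' => negb (v =? v') | _, _ => false end.

Definition PDistinctDefined : prog :=
  PComp PMul [PComp PMul [PComp PSgn [PProj 0]; PComp PSgn [PProj 1]];
              PComp PSgn [PComp PAdd [PComp PSub [PProj 0; PProj 1]; PComp PSub [PProj 1; PProj 0]]]].

Lemma eval_PDistinctDefined X a b xs :
  eval X PDistinctDefined (a :: b :: xs) (Nat.b2n (distinct_defined a b)).
Proof.
  unfold PDistinctDefined. eval_auto.
  destruct a as [|a], b as [|b]; simpl; try lia.
  destruct (Nat.eqb_spec a b), (Nat.ltb_spec 0 (a - b + (b - a))); simpl; lia.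
Qed.
#[export] Hint Resolve eval_PDistinctDefined : prog_eval.

(** * Compiling the clocked evaluator *)

Lemma evals_map_PPred X gs xs ys :
  evals X gs xs ys -> evals X (map (fun g => PComp PPred [g]) gs) xs (map pred ys).
Proof. induction 1; simpl; eval_auto; auto. Qed.

(* [compile p (length xs)] computes [run (Nat.testbit c) s p xs] from the
   arguments [s :: c :: xs]: the oracle is given by the binary code [c].
   Compiled programs are total, so "undefined if some argument is undefined"
   is implemented by multiplying with the signs of the arguments. *)
Fixpoint compile (p : prog) (a : nat) : prog :=
  match p with
  | PZero => PConst 1
  | PSucc => match a with 0 => PZero | _ => PComp PSucc [PComp PSucc [PProj 2]] end
  | PProj i => if i <? a then PComp PSucc [PProj (S (S i))] else PZero
  | POrc => match a with 0 => PZero | _ => PComp PSucc [PComp PTestbit [PProj 1; PProj 2]] end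
  | PComp f gs =>
      PComp PMul [PAllDefined (map (fun g => compile g a) gs);
                  PComp (compile f (length gs))
                    (PProj 0 :: PProj 1 ::
                     map (fun cg => PComp PPred [cg]) (map (fun g => compile g a) gs))]
  | PRec f g =>
      match a with
      | 0 => PZero
      | S a' =>
        PComp (PRec (compile f a')
                 (PComp PMul [PComp PSgn [PProj 1];
                              PComp (compile g (S a))
                                (PProj 2 :: PProj 3 :: PProj 0 :: PComp PPred [PProj 1] ::
                                 PProjs 4 a')]))
              (PProj 2 :: PProj 0 :: PProj 1 :: PProjs 3 a')
      end
  | PMu f =>
      PComp PPred
        [PComp (PRec (PConst 0)
                  (PComp PMuStep [PProj 1; PProj 0;
                                  PComp (compile f (S a)) (PProj 2 :: PProj 3 :: PProj 0 :: PProjs 4 a)]))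
               (PProj 0 :: PProj 0 :: PProj 1 :: PProjs 2 a)]
  end.

Lemma eval_compile X p : forall a s c xs, length xs = a ->
  eval X (compile p a) (s :: c :: xs) (run (Nat.testbit c) s p xs).
Proof.
  induction p using prog_nested_ind; intros a s c xs <-; simpl.
  - eval_auto.
  - destruct xs; simpl; eval_auto.
  - destruct (nth_error xs i) eqn:E.
    + rewrite (proj2 (Nat.ltb_lt i (length xs))) by (apply nth_error_Some; congruence).
      eval_auto. constructor. exact E.
    + rewrite (proj2 (Nat.ltb_ge i (length xs))) by (apply nth_error_None; auto). eval_auto.
  - destruct xs; simpl; eval_auto.
  - set (ys := map (fun g => run (Nat.testbit c) s g xs) gs).
    assert (Hgs : evals X (map (fun g => compile g (length xs)) gs) (s :: c :: xs) ys).
    { subst ys. clear IHp. induction H; simpl; constructor; auto. }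
    replace (length gs) with (length (map pred ys)) by (subst ys; now rewrite !length_map).
    eapply ev_comp.
    + constructor; [apply eval_PAllDefined, Hgs|].
      constructor; [|constructor]. eapply ev_comp; [|apply IHp; reflexivity].
      do 2 (constructor; [constructor; reflexivity|]). apply evals_map_PPred, Hgs.
    + eval_auto. destruct all_defined; simpl; lia.
  - destruct xs as [|n xs']; simpl; [eval_auto|].
    eapply ev_comp; [eval_auto|].
    induction n as [|n IHn]; simpl; [constructor; apply IHp1; reflexivity|].
    econstructor; [exact IHn|]. eval_auto. destruct rec_run; simpl; lia.
  - set (val := fun t => run (Nat.testbit c) s p (t :: xs)).
    assert (Hsearch : forall t, eval X (PRec (PConst 0) (PComp PMuStep [PProj 1; PProj 0;
        PComp (compile p (S (length xs))) (PProj 2 :: PProj 3 :: PProj 0 :: PProjs 4 (length xs))]))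
        (t :: s :: c :: xs) (mu_run val t)).
    { induction t as [|t IHt]; [repeat constructor | econstructor; [exact IHt | eval_auto]]. }
    eval_auto. destruct (mu_run val s) as [|[|]]; reflexivity.
Qed.

(** * Binary codes of finite sets *)

Fixpoint code_below (f : nat -> bool) (L : nat) : nat :=
  match L with 0 => 0 | S L => code_below f L + 2 ^ L * Nat.b2n (f L) end.

Lemma code_below_lt f L : code_below f L < 2 ^ L.
Proof. induction L; simpl; [lia|]. destruct (f L); simpl; lia. Qed.

Lemma testbit_add_mul_pow2 a n k i : a < 2 ^ n ->
  Nat.testbit (a + 2 ^ n * k) i = if i <? n then Nat.testbit a i else Nat.testbit k (i - n).
Proof.
  intros Ha. assert (Hp : 2 ^ n <> 0) by (apply Nat.pow_nonzero; lia).
  destruct (i <? n) eqn:E.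
  - apply Nat.ltb_lt in E. rewrite <- (Nat.mod_pow2_bits_low _ n) by auto.
    rewrite Nat.mul_comm, Nat.Div0.mod_add, Nat.mod_small by auto. reflexivity.
  - apply Nat.ltb_ge in E. replace i with ((i - n) + n) at 1 by lia.
    rewrite <- Nat.div_pow2_bits, Nat.mul_comm, Nat.div_add, Nat.div_small by auto.
    reflexivity.
Qed.

Lemma testbit_code_below f L i : Nat.testbit (code_below f L) i = (i <? L) && f i.
Proof.
  induction L as [|L IH]; cbn [code_below]; [rewrite Nat.bits_0; destruct i; reflexivity|].
  rewrite testbit_add_mul_pow2 by apply code_below_lt.
  destruct (Nat.lt_trichotomy i L) as [Hi|[->|Hi]].
  - rewrite IH, (proj2 (Nat.ltb_lt i L)), (proj2 (Nat.ltb_lt i (S L))) by lia. reflexivity.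
  - rewrite Nat.ltb_irrefl, Nat.sub_diag, Nat.b2n_bit0, (proj2 (Nat.ltb_lt L (S L))) by lia.
    reflexivity.
  - rewrite (proj2 (Nat.ltb_ge i L)), (proj2 (Nat.ltb_ge i (S L))) by lia.
    replace (i - L) with (S (i - S L)) by lia. destruct (f L); simpl; apply Nat.bits_0.
Qed.

Lemma testbit_true_lt a i : Nat.testbit a i = true -> i < a.
Proof.
  intros H. destruct (Nat.eq_dec a 0) as [->|Ha]; [rewrite Nat.bits_0 in H; discriminate|].
  destruct (le_lt_dec a i) as [Hai|]; auto.
  rewrite Nat.bits_above_log2 in H; [discriminate|].
  pose proof (Nat.log2_lt_lin a). lia.
Qed.

Lemma least_true (b : nat -> bool) :
  (exists y, b y = true) -> exists y, b y = true /\ forall z, z < y -> b z = false.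
Proof.
  intros [y Hy]. induction y as [y IH] using (well_founded_induction lt_wf).
  destruct (existsb b (seq 0 y)) eqn:E.
  - apply existsb_exists in E. destruct E as (z & Hz & Hbz). apply in_seq in Hz.
    apply (IH z); [lia | exact Hbz].
  - exists y. split; auto. intros z Hz. destruct (b z) eqn:Hbz; auto.
    assert (existsb b (seq 0 y) = true)
      by (apply existsb_exists; exists z; rewrite in_seq; split; [lia | auto]).
    congruence.
Qed.

Lemma eval_PMu_least X q xs (b : nat -> bool) :
  (forall y, eval X q (y :: xs) (Nat.b2n (b y))) -> (exists y, b y = false) ->
  exists y, eval X (PMu q) xs y /\ b y = false /\ forall z, z < y -> b z = true.
Proof.
  intros Hq Hex. destruct (least_true (fun y => negb (b y))) as (y & Hy & Hleast).
  { destruct Hex as [y Hy]. exists y. rewrite Hy. reflexivity. }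
  apply negb_true_iff in Hy.
  assert (Hbelow : forall z, z < y -> b z = true).
  { intros z Hz. apply negb_false_iff, Hleast, Hz. }
  exists y. repeat split; auto. constructor.
  - eapply eval_eq; [apply Hq | rewrite Hy; reflexivity].
  - intros z Hz. exists 0. eapply eval_eq; [apply Hq | rewrite Hbelow; auto].
Qed.

Fixpoint sum_below (f : nat -> nat) (j : nat) : nat :=
  match j with 0 => 0 | S j => sum_below f j + f j end.

Lemma sum_below_neq_0 f j : sum_below f j <> 0 <-> exists i, i < j /\ f i <> 0.
Proof.
  induction j as [|j IH]; simpl.
  - split; [lia | intros (i & Hi & _); lia].
  - destruct (Nat.eq_dec (f j) 0) as [Hj|Hj].
    + rewrite Hj, Nat.add_0_r, IH. split; intros (i & Hi & Hfi); exists i; split; auto.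
      destruct (Nat.eq_dec i j) as [->|]; [contradiction | lia].
    + split; [intros _; exists j; auto | lia].
Qed.

(* The summand [q] is evaluated on [i :: acc :: xs], where [acc] is the partial sum. *)
Definition PSum (q : prog) : prog := PRec (PConst 0) (PComp PAdd [PProj 1; q]).

Lemma eval_PSum X q f xs j :
  (forall i acc, eval X q (i :: acc :: xs) (f i)) -> eval X (PSum q) (j :: xs) (sum_below f j).
Proof.
  intros Hq. induction j as [|j IH]; [constructor; eval_auto|].
  econstructor; [exact IH|]. eval_auto.
Qed.

Lemma computable_fun_of_total p :
  (forall n, exists v, eval empty_oracle p [n] v) ->
  exists f, computable_fun f /\ forall n, eval empty_oracle p [n] (f n).
Proof.
  intros Htot.
  exists (fun n => proj1_sig (constructive_indefinite_description _ (Htot n))).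
  assert (H : forall n, eval empty_oracle p [n]
            (proj1_sig (constructive_indefinite_description _ (Htot n))))
    by (intros n; apply proj2_sig).
  split; [exists p|]; exact H.
Qed.

(** * Principal functions and hyperimmunity *)

Lemma principal_function_le B q a b : principal_function B q -> a <= b -> q a <= q b.
Proof. intros [Hinc _] Hab. induction Hab; auto. specialize (Hinc m). lia. Qed.

Lemma least_element_above B : infinite_set B ->
  forall k, exists b, B b = true /\ k <= b /\ forall c, k <= c < b -> B c = false.
Proof.
  intros HB k. destruct (least_true (fun b => (k <=? b) && B b)) as (b & Hb & Hleast).
  - destruct (HB k) as (b & ? & ?). exists b. apply andb_true_iff. rewrite Nat.leb_le. auto.
  - apply andb_true_iff in Hb. rewrite Nat.leb_le in Hb. exists b. split; [tauto|]. split; [tauto|].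
    intros c' Hc'. specialize (Hleast c' ltac:(lia)).
    rewrite (proj2 (Nat.leb_le k c')) in Hleast by lia. exact Hleast.
Qed.

Lemma principal_function_exists B : infinite_set B -> exists q, principal_function B q.
Proof.
  intros HB. pose proof (least_element_above B HB) as Hnext.
  set (next k := proj1_sig (constructive_indefinite_description _ (Hnext k))).
  assert (Hnext_spec : forall k, B (next k) = true /\ k <= next k /\
                              forall c, k <= c < next k -> B c = false)
    by (intros k; apply proj2_sig).
  set (q := fix q n := match n with 0 => next 0 | S n => next (S (q n)) end).
  assert (Hq0 : q 0 = next 0) by reflexivity.
  assert (HqS : forall n, q (S n) = next (S (q n))) by reflexivity.
  clearbody q next.
  assert (Hinc : forall n, q n < q (S n)) by (intros n; rewrite HqS; apply Hnext_spec).
  assert (Hge : forall n, n <= q n).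
  { induction n; [rewrite Hq0; apply Hnext_spec|]. specialize (Hinc n). lia. }
  assert (Hgap : forall n c, c < q n -> B c = true -> exists i, q i = c).
  { induction n as [|n IH]; intros c' Hc' HBc'.
    - rewrite (proj2 (proj2 (Hnext_spec 0)) c') in HBc' by lia. discriminate.
    - destruct (Nat.lt_trichotomy c' (q n)) as [Hlt|[->|Hgt]]; eauto.
      rewrite (proj2 (proj2 (Hnext_spec (S (q n)))) c') in HBc' by (rewrite HqS in Hc'; lia).
      discriminate. }
  exists q. split; [exact Hinc|]. intros x. split.
  - intros Hx. apply (Hgap (S x)); [specialize (Hge (S x)); lia | exact Hx].
  - intros [[|n] <-]; [rewrite Hq0 | rewrite HqS]; apply Hnext_spec.
Qed.

Lemma principal_function_below_intervals B q N :
  principal_function B q ->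
  (forall j, exists b, N j <= b < N (S j) /\ B b = true) ->
  forall j, q j < N (S j).
Proof.
  intros Hq HN.
  assert (Hreach : forall j, exists t, j <= t /\ q t < N (S j)).
  { induction j as [|j IH].
    - destruct (HN 0) as (b & Hb & HBb). destruct (proj1 (proj2 Hq b) HBb) as [t <-].
      exists t. split; lia.
    - destruct IH as (t & Ht & Hqt). destruct (HN (S j)) as (b & Hb & HBb).
      destruct (proj1 (proj2 Hq b) HBb) as [t' <-]. exists t'. split; [|lia].
      destruct (le_lt_dec t' t) as [Hle|]; [|lia].
      pose proof (principal_function_le B q _ _ Hq Hle). lia. }
  intros j. destruct (Hreach j) as (t & Ht & Hqt).
  pose proof (principal_function_le B q _ _ Hq Ht). lia.
Qed.

Lemma not_hyperimmune_of_computable_intervals B N :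
  computable_fun N -> (forall j, exists b, N j <= b < N (S j) /\ B b = true) ->
  ~ hyperimmune B.
Proof.
  intros [p Hp] HN [Hinf Hdom].
  destruct (principal_function_exists B Hinf) as [q Hq].
  destruct (Hdom q Hq (fun j => N (S j))) as [j Hj].
  - exists (PComp p [PComp PSucc [PProj 0]]). intros j. eval_auto.
  - pose proof (principal_function_below_intervals B q N Hq HN j). lia.
Qed.

(** * Forcing with finite stems inside [A] *)

Record cond : Type := Cond { stem : nat -> bool; len : nat }.

Definition valid (A : nat -> bool) (c : cond) : Prop :=
  subset (stem c) A /\ forall i, len c <= i -> stem c i = false.

Definition extends (A : nat -> bool) (c c' : cond) : Prop :=
  valid A c' /\ len c <= len c' /\ agree_upto (stem c) (stem c') (len c).

Definition forces_neq (A C : nat -> bool) (c : cond) (p : prog) : Prop :=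
  forall G, subset G A -> agree_upto (stem c) G (len c) ->
  ~ (forall x, eval G p [x] (Nat.b2n (C x))).

Lemma extends_trans A c c' c'' : extends A c c' -> extends A c' c'' -> extends A c c''.
Proof.
  intros (_ & Hlen & Hagree) (Hvalid & Hlen' & Hagree'). repeat split; try apply Hvalid; [lia|].
  intros z Hz. rewrite Hagree, Hagree' by lia. reflexivity.
Qed.

Lemma forces_neq_extends A C c c' p :
  forces_neq A C c p -> extends A c c' -> forces_neq A C c' p.
Proof.
  intros Hforce (_ & Hlen & Hagree) G HGA HG. apply Hforce; auto.
  intros z Hz. rewrite Hagree, HG by lia. reflexivity.
Qed.

Lemma extends_with_element A c : infinite_set A -> valid A c ->
  exists c', extends A c c' /\ exists i, len c <= i < len c' /\ stem c' i = true.
Proof.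
  intros HA [Hsub Hzero]. destruct (HA (len c)) as (a & Ha & HAa).
  exists (Cond (fun i => stem c i || (i =? a)) (S a)). repeat split; simpl.
  - intros i Hi. apply orb_true_iff in Hi as [Hi|Hi]; auto.
    apply Nat.eqb_eq in Hi. subst. auto.
  - intros i Hi. rewrite Hzero, (proj2 (Nat.eqb_neq i a)) by lia. reflexivity.
  - lia.
  - intros z Hz. rewrite (proj2 (Nat.eqb_neq z a)) by lia. rewrite orb_false_r. reflexivity.
  - exists a. rewrite Nat.eqb_refl, orb_true_r. split; [lia | reflexivity].
Qed.

Section Forcing.
Variables (A C : nat -> bool) (c : cond) (p : prog).
Hypothesis A_infinite : infinite_set A.
Hypothesis c_valid : valid A c.

Definition stem_code : nat := code_below (stem c) (len c).

Definition ext_oracle (n k : nat) : nat -> bool := Nat.testbit (stem_code + 2 ^ n * k).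

Lemma ext_oracle_spec n k i : len c <= n ->
  ext_oracle n k i = if i <? n then stem c i else Nat.testbit k (i - n).
Proof.
  intros Hn. unfold ext_oracle. rewrite testbit_add_mul_pow2.
  - destruct (i <? n); auto. unfold stem_code. rewrite testbit_code_below.
    destruct (Nat.ltb_spec i (len c)); auto. symmetry. apply c_valid. lia.
  - pose proof (code_below_lt (stem c) (len c)).
    pose proof (Nat.pow_le_mono_r 2 _ _ ltac:(lia) Hn). unfold stem_code. lia.
Qed.

Definition bits_in_A (n k : nat) : Prop :=
  forall i, Nat.testbit k i = true -> A (n + i) = true.

(* [k] is both the finite extension above [n] and the clock, so that one
   unbounded search ranges over both. *)
Definition trial (n k x : nat) : nat := run (ext_oracle n k) k p [x].

Lemma force_by_wrong_value n k x v :
  len c <= n -> bits_in_A n k -> eval (ext_oracle n k) p [x] v -> v <> Nat.b2n (C x) ->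
  exists c', extends A c c' /\ forces_neq A C c' p.
Proof.
  intros Hn Hk Hev Hne. destruct (eval_use _ _ _ _ Hev) as [U HU].
  set (s' := fun i => (i <? n + U) && ext_oracle n k i).
  assert (Hs' : agree_upto (ext_oracle n k) s' (n + U)).
  { intros z Hz. unfold s'. rewrite (proj2 (Nat.ltb_lt z (n + U))) by lia. reflexivity. }
  exists (Cond s' (n + U)). repeat split; simpl.
  - intros i Hi. apply andb_true_iff in Hi as [_ Hi]. rewrite ext_oracle_spec in Hi by auto.
    destruct (Nat.ltb_spec i n); [apply c_valid; auto|].
    apply Hk in Hi. replace (n + (i - n)) with i in Hi by lia. exact Hi.
  - intros i Hi. unfold s'. rewrite (proj2 (Nat.ltb_ge i (n + U))) by lia. reflexivity.
  - lia.
  - intros z Hz. rewrite <- Hs' by lia. rewrite ext_oracle_spec, (proj2 (Nat.ltb_lt z n)) by lia.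
    reflexivity.
  - intros G HGA HG Hcomp. cbn in HG. apply Hne. eapply eval_deterministic; [|apply (Hcomp x)].
    apply HU. intros z Hz. rewrite Hs', HG by lia. reflexivity.
Qed.

Lemma force_by_divergence n x :
  len c <= n -> (forall k v, bits_in_A n k -> ~ eval (ext_oracle n k) p [x] v) ->
  exists c', extends A c c' /\ forces_neq A C c' p.
Proof.
  intros Hn Hdiv. exists (Cond (stem c) n). repeat split; simpl; try apply c_valid.
  - intros i Hi. apply c_valid. lia.
  - exact Hn.
  - intros G HGA HG Hcomp. destruct (eval_use _ _ _ _ (Hcomp x)) as [U HU].
    apply (Hdiv (code_below (fun i => G (n + i)) U) (Nat.b2n (C x))).
    + intros i Hi. rewrite testbit_code_below in Hi. apply andb_true_iff in Hi. apply HGA. tauto.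
    + apply HU. intros z Hz. rewrite ext_oracle_spec by auto. destruct (Nat.ltb_spec z n).
      * symmetry. apply HG. auto.
      * rewrite testbit_code_below, (proj2 (Nat.ltb_lt (z - n) U)) by lia. simpl. f_equal. lia.
Qed.

Definition PTrial : prog :=
  PComp (compile p 1)
    [PProj 1; PComp PAdd [PConst stem_code; PComp PMul [PComp PPow2 [PProj 0]; PProj 1]]; PProj 2].

Lemma eval_PTrial X n k x xs : eval X PTrial (n :: k :: x :: xs) (trial n k x).
Proof. unfold PTrial. eval_auto. apply eval_compile. reflexivity. Qed.
#[local] Hint Resolve eval_PTrial : prog_eval.

Definition splitting (n k x k' : nat) : bool := distinct_defined (trial n k x) (trial n k' x).

Definition splittings (n k : nat) : nat :=
  sum_below (fun x => sum_below (fun k' => Nat.b2n (splitting n k x k')) (S k)) (S k).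

Definition PSplittings : prog :=
  PComp (PSum (PComp (PSum (PComp PDistinctDefined
                              [PComp PTrial [PProj 4; PProj 3; PProj 2];
                               PComp PTrial [PProj 4; PProj 0; PProj 2]]))
                     [PComp PSucc [PProj 2]; PProj 0; PProj 2; PProj 3]))
        [PComp PSucc [PProj 0]; PProj 0; PProj 1].

Lemma eval_PSplittings X k n xs : eval X PSplittings (k :: n :: xs) (splittings n k).
Proof.
  unfold PSplittings. eapply ev_comp; [eval_auto|]. apply eval_PSum. intros x acc.
  eapply ev_comp; [eval_auto|]. apply eval_PSum. intros k' acc'. eval_auto.
Qed.
#[local] Hint Resolve eval_PSplittings : prog_eval.

Lemma splittings_neq_0 n k : splittings n k <> 0 ->
  exists x k', x <= k /\ k' <= k /\ splitting n k x k' = true.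
Proof.
  unfold splittings. intros H.
  apply sum_below_neq_0 in H as (x & Hx & H). apply sum_below_neq_0 in H as (k' & Hk' & H).
  exists x, k'. repeat split; try lia. destruct splitting; [reflexivity | contradiction].
Qed.

Lemma splittings_eq_0 n k x k' : splittings n k = 0 -> x <= k -> k' <= k ->
  trial n k x <> 0 -> trial n k' x <> 0 -> trial n k x = trial n k' x.
Proof.
  intros H Hx Hk' Hdef Hdef'.
  assert (Hsplit : splitting n k x k' = false).
  { destruct (splitting n k x k') eqn:E; auto. exfalso. revert H. apply sum_below_neq_0.
    exists x. split; [lia|]. apply sum_below_neq_0. exists k'. rewrite E. split; [lia | auto]. }
  unfold splitting, distinct_defined in Hsplit.
  destruct (trial n k x), (trial n k' x); try contradiction.
  apply negb_false_iff, Nat.eqb_eq in Hsplit. congruence.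
Qed.

Section Splitting.
Hypothesis correct_where_defined : forall n k x v,
  len c <= n -> bits_in_A n k -> eval (ext_oracle n k) p [x] v -> v = Nat.b2n (C x).
Hypothesis defined_somewhere : forall n x,
  len c <= n -> exists k v, bits_in_A n k /\ eval (ext_oracle n k) p [x] v.

Lemma trial_correct_above n x B : len c <= n ->
  exists k, B <= k /\ bits_in_A n k /\ trial n k x = S (Nat.b2n (C x)).
Proof.
  intros Hn. destruct (defined_somewhere n x Hn) as (k0 & v & Hk0 & Hev).
  destruct (run_complete _ _ _ _ Hev) as [s0 Hs0].
  destruct (run_use (ext_oracle n k0) s0 p [x]) as [U HU].
  destruct (A_infinite (n + U + s0 + B)) as (a & Ha & HAa).
  (* Adding the element [a] of [A] makes the code large without changing the
     oracle below the use [U]. *)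
  set (k := Nat.setbit k0 (a - n)).
  assert (Hlarge : a - n < k) by apply testbit_true_lt, Nat.setbit_eq.
  assert (Hbits : forall i, i <> a - n -> Nat.testbit k i = Nat.testbit k0 i)
    by (intros i Hi; apply Nat.setbit_neq; auto).
  assert (Hk : bits_in_A n k).
  { intros i Hi. destruct (Nat.eq_dec i (a - n)) as [->|Hia].
    - replace (n + (a - n)) with a by lia. exact HAa.
    - rewrite Hbits in Hi by auto. auto. }
  assert (Htrial : trial n k x = S v).
  { unfold trial. apply (run_mono _ _ s0); [lia|]. rewrite HU; auto.
    intros z Hz. rewrite !ext_oracle_spec by auto.
    destruct (z <? n); [reflexivity | rewrite Hbits by lia; reflexivity]. }
  exists k. repeat split; [lia | exact Hk |]. rewrite Htrial. f_equal.
  apply (correct_where_defined n k x v); auto. eapply run_sound. exact Htrial.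
Qed.

Lemma splitting_meets_complement n k : len c <= n -> splittings n k <> 0 ->
  exists b, n <= b < n + k /\ A b = false.
Proof.
  intros Hn Hsplit. destruct (splittings_neq_0 n k Hsplit) as (x & k' & Hx & Hk' & Hs).
  unfold splitting, distinct_defined in Hs.
  destruct (trial n k x) as [|v] eqn:E; [discriminate|].
  destruct (trial n k' x) as [|v'] eqn:E'; [discriminate|].
  apply negb_true_iff, Nat.eqb_neq in Hs.
  assert (Hout : forall k'', k'' <= k -> ~ bits_in_A n k'' -> exists b, n <= b < n + k /\ A b = false).
  { intros k'' Hk'' Hnot. apply not_all_ex_not in Hnot as [i Hi].
    destruct (Nat.testbit k'' i) eqn:Hb; [|exfalso; apply Hi; discriminate].
    destruct (A (n + i)) eqn:HA; [exfalso; apply Hi; auto|].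
    exists (n + i). pose proof (testbit_true_lt _ _ Hb). split; [lia | exact HA]. }
  destruct (classic (bits_in_A n k)) as [Hk|Hk]; [|exact (Hout k (le_n k) Hk)].
  apply (Hout k'); auto. intros Hk2. apply Hs.
  rewrite (correct_where_defined n k x v), (correct_where_defined n k' x v');
    auto; eapply run_sound; eauto.
Qed.

Definition PDecide (n0 : nat) : prog :=
  PComp PPred [PComp PTrial [PConst n0;
                             PComp (PMu (PComp PIsZero [PComp PTrial [PProj 1; PProj 0; PProj 2]]))
                               [PConst n0; PProj 0];
                             PProj 0]].

(* Without splittings at [n0], the first convergent trial agrees with a correct
   trial of larger code. *)
Lemma computable_of_no_splitting n0 :
  len c <= n0 -> (forall k, splittings n0 k = 0) -> computable_set C.
Proof.
  intros Hn0 Hnone. exists (PDecide n0). intros x.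
  destruct (eval_PMu_least empty_oracle (PComp PIsZero [PComp PTrial [PProj 1; PProj 0; PProj 2]])
              [n0; x] (fun k => trial n0 k x =? 0)) as (k1 & Hk1 & Hdef & _).
  { intros k. eval_auto. }
  { destruct (trial_correct_above n0 x 0 Hn0) as (k & _ & _ & Hk). exists k. rewrite Hk. reflexivity. }
  apply Nat.eqb_neq in Hdef.
  destruct (trial_correct_above n0 x (x + k1) Hn0) as (k2 & Hk2 & _ & Htrial2).
  assert (Hsame : trial n0 k2 x = trial n0 k1 x)
    by (apply splittings_eq_0; auto; lia).
  unfold PDecide. eval_auto. rewrite <- Hsame, Htrial2. reflexivity.
Qed.

Definition PNext : prog :=
  PComp PSucc [PComp PAdd [PProj 0; PMu (PComp PIsZero [PSplittings])]].

Definition PIterNext : prog := PRec (PConst (len c)) (PComp PNext [PProj 1]).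

(* Iterating "go past the first splitting" yields a computable sequence of
   intervals, each of which meets the complement of [A]. *)
Lemma not_hyperimmune_of_splittings :
  (forall n, len c <= n -> exists k, splittings n k <> 0) ->
  ~ hyperimmune (fun n => negb (A n)).
Proof.
  intros Hsplit.
  assert (Hnext : forall n, len c <= n -> exists n',
             eval empty_oracle PNext [n] n' /\ n < n' /\ exists b, n <= b < n' /\ A b = false).
  { intros n Hn.
    destruct (eval_PMu_least empty_oracle (PComp PIsZero [PSplittings]) [n]
                (fun k => splittings n k =? 0)) as (k & Hk & Hsk & _).
    - intros k. eval_auto.
    - destruct (Hsplit n Hn) as [k Hk]. exists k. apply Nat.eqb_neq, Hk.
    - apply Nat.eqb_neq in Hsk. exists (S (n + k)). split; [unfold PNext; eval_auto|].
      destruct (splitting_meets_complement n k Hn Hsk) as (b & Hb & HAb).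
      split; [lia|]. exists b. split; [lia | exact HAb]. }
  assert (Hiter : forall j, exists N, eval empty_oracle PIterNext [j] N /\ len c <= N).
  { induction j as [|j (N & HN & HcN)]; [exists (len c); split; [constructor; eval_auto | lia]|].
    destruct (Hnext N HcN) as (N' & HN' & HNN' & _).
    exists N'. split; [econstructor; [exact HN | eval_auto] | lia]. }
  destruct (computable_fun_of_total PIterNext) as (N & HNcomp & HN).
  { intros j. destruct (Hiter j) as (N & HN & _). eauto. }
  apply (not_hyperimmune_of_computable_intervals _ N HNcomp). intros j.
  destruct (Hiter j) as (Nj & HNj & HcNj).
  rewrite <- (eval_deterministic _ _ _ _ _ (HN j) HNj) in HcNj.
  destruct (Hnext (N j) HcNj) as (N' & HN' & _ & b & Hb & HAb).
  assert (HNS : N (S j) = N').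
  { eapply eval_deterministic; [apply HN | econstructor; [apply HN | eval_auto]]. }
  exists b. rewrite HNS, HAb. auto.
Qed.

End Splitting.

Lemma force_requirement : ~ computable_set C -> hyperimmune (fun n => negb (A n)) ->
  exists c', extends A c c' /\ forces_neq A C c' p.
Proof.
  intros HC HH.
  destruct (classic (exists n k x v, len c <= n /\ bits_in_A n k /\
                       eval (ext_oracle n k) p [x] v /\ v <> Nat.b2n (C x)))
    as [(n & k & x & v & Hn & Hk & Hev & Hne)|Hno_wrong].
  { exact (force_by_wrong_value n k x v Hn Hk Hev Hne). }
  destruct (classic (exists n x, len c <= n /\
                       forall k v, bits_in_A n k -> ~ eval (ext_oracle n k) p [x] v))
    as [(n & x & Hn & Hdiv)|Hno_div].
  { exact (force_by_divergence n x Hn Hdiv). }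
  exfalso.
  assert (Hcorrect : forall n k x v, len c <= n -> bits_in_A n k ->
            eval (ext_oracle n k) p [x] v -> v = Nat.b2n (C x)).
  { intros n k x v Hn Hk Hev. apply NNPP. intros Hne. apply Hno_wrong. eauto 8. }
  assert (Htotal : forall n x, len c <= n ->
            exists k v, bits_in_A n k /\ eval (ext_oracle n k) p [x] v).
  { intros n x Hn. apply NNPP. intros Hnone. apply Hno_div. exists n, x. split; auto.
    intros k v Hk Hev. apply Hnone. eauto. }
  destruct (classic (exists n, len c <= n /\ forall k, splittings n k = 0))
    as [(n & Hn & Hnone)|Hsplit].
  - exact (HC (computable_of_no_splitting Hcorrect Htotal n Hn Hnone)).
  - apply (not_hyperimmune_of_splittings Hcorrect); auto.
    intros n Hn. apply NNPP. intros Hnone. apply Hsplit. exists n. split; auto.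
    intros k. apply NNPP. intros Hk. apply Hnone. eauto.
Qed.

End Forcing.

(** * Enumerating programs *)

Fixpoint list_code (l : list nat) : nat :=
  match l with [] => 0 | x :: l => S (Cantor.to_nat (x, list_code l)) end.

Fixpoint prog_code (p : prog) : nat :=
  match p with
  | PZero => Cantor.to_nat (0, 0)
  | PSucc => Cantor.to_nat (1, 0)
  | PProj i => Cantor.to_nat (2, i)
  | POrc => Cantor.to_nat (3, 0)
  | PComp f gs => Cantor.to_nat (4, Cantor.to_nat (prog_code f, list_code (map prog_code gs)))
  | PRec f g => Cantor.to_nat (5, Cantor.to_nat (prog_code f, prog_code g))
  | PMu f => Cantor.to_nat (6, prog_code f)
  end.

Lemma list_code_inj l l' : list_code l = list_code l' -> l = l'.
Proof.
  revert l'. induction l as [|x l IH]; intros [|x' l'] H; try discriminate; auto.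
  apply Nat.succ_inj, Cantor.to_nat_inj in H. injection H as -> H. f_equal. auto.
Qed.

Lemma to_nat_pair_inj a b a' b' : Cantor.to_nat (a, b) = Cantor.to_nat (a', b') -> a = a' /\ b = b'.
Proof. intros H. apply Cantor.to_nat_inj in H. injection H. auto. Qed.

Lemma prog_code_inj p q : prog_code p = prog_code q -> p = q.
Proof.
  revert q. induction p using prog_nested_ind; intros [] E; cbn [prog_code] in E;
    apply to_nat_pair_inj in E as [Etag E]; try discriminate; auto.
  - apply to_nat_pair_inj in E as [Ef Egs]. f_equal; auto.
    apply list_code_inj in Egs. revert l Egs.
    induction H as [|g gs Hg _ IH]; intros [|g' gs'] E; try discriminate; auto.
    injection E as E1 E2. f_equal; auto.
  - apply to_nat_pair_inj in E as [Ef Eg]. f_equal; auto.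
  - f_equal; auto.
Qed.

Lemma prog_enumeration : exists dec : nat -> prog, forall p, exists e, dec e = p.
Proof.
  exists (fun e => epsilon (inhabits PZero) (fun q => prog_code q = e)).
  intros p. exists (prog_code p). apply prog_code_inj.
  apply (epsilon_spec (inhabits PZero) (fun q => prog_code q = prog_code p)). eauto.
Qed.

(** * The generic subset *)

Section Construction.
Variables (A C : nat -> bool) (dec : nat -> prog).
Hypothesis A_infinite : infinite_set A.
Hypothesis dec_onto : forall p, exists e, dec e = p.
Hypothesis forcing_dense : forall c p, valid A c -> exists c', extends A c c' /\ forces_neq A C c' p.

Definition good_step (c c' : cond) (p : prog) : Prop :=
  extends A c c' /\ (exists i, len c <= i < len c' /\ stem c' i = true) /\ forces_neq A C c' p.

Lemma good_step_exists c p : exists c', valid A c -> good_step c c' p.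
Proof.
  destruct (classic (valid A c)) as [Hc|Hc]; [|exists c; tauto].
  destruct (forcing_dense c p Hc) as (c1 & Hc1 & Hforce).
  destruct (extends_with_element A c1 A_infinite (proj1 Hc1)) as (c2 & Hc2 & i & Hi & Hc2i).
  exists c2. intros _. split; [|split].
  - exact (extends_trans A c c1 c2 Hc1 Hc2).
  - exists i. destruct Hc1 as (_ & Hlen & _). split; [lia | exact Hc2i].
  - exact (forces_neq_extends A C c1 c2 p Hforce Hc2).
Qed.

Definition next_cond (e : nat) (c : cond) : cond :=
  proj1_sig (constructive_indefinite_description _ (good_step_exists c (dec e))).

Lemma next_cond_spec e c : valid A c -> good_step c (next_cond e c) (dec e).
Proof. exact (proj2_sig (constructive_indefinite_description _ (good_step_exists c (dec e)))). Qed.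

Fixpoint cond_seq (e : nat) : cond :=
  match e with 0 => Cond (fun _ => false) 0 | S e => next_cond e (cond_seq e) end.

Lemma cond_seq_valid e : valid A (cond_seq e).
Proof.
  induction e as [|e IH]; [split; [discriminate | reflexivity]|].
  apply (next_cond_spec e _ IH).
Qed.

Lemma cond_seq_step e : good_step (cond_seq e) (cond_seq (S e)) (dec e).
Proof. apply next_cond_spec, cond_seq_valid. Qed.

Lemma len_cond_seq e : e <= len (cond_seq e).
Proof.
  induction e as [|e IH]; [simpl; lia|].
  destruct (cond_seq_step e) as (_ & (i & Hi & _) & _). lia.
Qed.

Lemma cond_seq_extends e e' : e <= e' -> extends A (cond_seq e) (cond_seq e').
Proof.
  induction 1 as [|e' _ IH].
  - split; [apply cond_seq_valid | split; [lia | intros z _; reflexivity]].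
  - exact (extends_trans A _ _ _ IH (proj1 (cond_seq_step e'))).
Qed.

Definition generic (x : nat) : bool := stem (cond_seq (S x)) x.

Lemma generic_agree e : agree_upto (stem (cond_seq e)) generic (len (cond_seq e)).
Proof.
  intros z Hz. unfold generic. destruct (le_lt_dec (S z) e) as [Hze|Hez].
  - symmetry. apply (cond_seq_extends (S z) e Hze). pose proof (len_cond_seq (S z)). lia.
  - apply (cond_seq_extends e (S z)); [lia | exact Hz].
Qed.

Lemma generic_subset : subset generic A.
Proof. intros x Hx. apply (cond_seq_valid (S x)), Hx. Qed.

Lemma generic_infinite : infinite_set generic.
Proof.
  intros m. destruct (cond_seq_step m) as (_ & (i & Hi & Hstem) & _).
  exists i. pose proof (len_cond_seq m). split; [lia|].
  rewrite <- (generic_agree (S m)); auto. lia.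
Qed.

Lemma generic_not_computes p : ~ (forall x, eval generic p [x] (Nat.b2n (C x))).
Proof.
  destruct (dec_onto p) as [e <-].
  destruct (cond_seq_step e) as (_ & _ & Hforce).
  exact (Hforce generic generic_subset (generic_agree (S e))).
Qed.

End Construction.

Theorem proposition3p4 (C A : nat -> bool) :
  ~ computable_set C ->
  infinite_set A ->
  hyperimmune (fun n => negb (A n)) ->
  exists G : nat -> bool,
    subset G A /\ infinite_set G /\ ~ turing_computes G C.
Proof.
  intros HC HA HH.
  destruct prog_enumeration as [dec Hdec].
  assert (Hdense : forall c p, valid A c -> exists c', extends A c c' /\ forces_neq A C c' p)
    by (intros c p Hc; exact (force_requirement A C c p HA Hc HC HH)).
  exists (generic A C dec HA Hdense). split; [|split].
  - apply generic_subset.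
  - apply generic_infinite.
  - intros [p Hp]. exact (generic_not_computes A C dec HA Hdec Hdense p Hp).
Qed.
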